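(* Let $\ell$ be a prime, $L$ a finite extension of $\mathbb Q_\ell$, $\tau$ a field automorphism of $L$ of order $2$, $L^\tau$ its fixed field, $\lambda$ a uniformizer of $L^\tau$, and $v_\lambda$ the valuation on $\overline{\mathbb Q_\ell}$ normalized by $v_\lambda(\lambda)=1$. Let $C=\{x\in\mathcal O_L^\times: x\tau(x)=1\}$ and, for $n\ge0$, $C(n)=\{x\in C: v_\lambda(x-1)\ge n\}$. If $\ell\neq2$, then for every $n\ge1$ the quotient $C(n)/C(n+1)$ has order $|\mathcal O_{L^\tau}/\lambda\mathcal O_{L^\tau}|$. If $\ell=2$, the same holds for every $n>v_\lambda(2)$. *)

From HB Require Import structures.
From mathcomp Require Import all_boot all_order all_algebra.
From mathcomp Require Import reals.
Set Implicit Arguments. Unset Strict Implicit. Unset Printing Implicit Defensive.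
Import Order.TTheory GRing.Theory Num.Theory.
Local Open Scope ring_scope.

(* A finite extension L of Q_l is represented as a field L together with its
   (unique) absolute value |.| : L -> R extending the l-adic absolute value of Q,
   L being complete and finite-dimensional over the closure of Q in L
   (this closure is Q_l, the completion of Q for the l-adic absolute value). *)

Section Defs.
Variables (R : realType) (L : fieldType) (absv : L -> R).

Definition padic_abs (l : nat) (q : rat) : R :=
  if q == 0 then 0
  else (l%:R ^+ logn l (absz (denq q))) / (l%:R ^+ logn l (absz (numq q))).

Definition is_abs_value : Prop :=
  [/\ forall x, 0 <= absv x,
      forall x, absv x = 0 <-> x = 0,
      forall x y, absv (x * y) = absv x * absv y
    & forall x y, absv (x + y) <= Num.max (absv x) (absv y)].

Definition abs_complete : Prop :=
  forall u : nat -> L,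
    (forall eps : R, 0 < eps -> exists N : nat,
        forall m k, (N <= m)%N -> (N <= k)%N -> absv (u m - u k) < eps) ->
    exists y : L, forall eps : R, 0 < eps -> exists N : nat,
        forall m, (N <= m)%N -> absv (u m - y) < eps.

Definition in_Ql (y : L) : Prop :=
  forall eps : R, 0 < eps -> exists q : rat, absv (y - ratr q) < eps.

Definition finite_over_Ql : Prop :=
  exists (n : nat) (b : 'I_n -> L), forall x : L,
    exists c : 'I_n -> L, (forall i, in_Ql (c i)) /\ x = \sum_(i < n) c i * b i.

Definition finite_ext_Ql (l : nat) : Prop :=
  [/\ is_abs_value, abs_complete,
      forall q : rat, absv (ratr q) = padic_abs l q
    & finite_over_Ql].

Definition order2_aut (tau : L -> L) : Prop :=
  [/\ forall x y, tau (x + y) = tau x + tau y,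
      forall x y, tau (x * y) = tau x * tau y,
      tau 1 = 1,
      forall x, tau (tau x) = x
    & exists x, tau x <> x].

Definition O_fix (tau : L -> L) (x : L) : Prop := tau x = x /\ absv x <= 1.

Definition uniformizer (tau : L -> L) (lam : L) : Prop :=
  [/\ O_fix tau lam, lam <> 0, absv lam < 1
    & forall y, O_fix tau y -> absv y < 1 -> exists z, O_fix tau z /\ y = lam * z].

Definition Cgrp (tau : L -> L) (x : L) : Prop := absv x = 1 /\ x * tau x = 1.

(* C(n) = {x in C : v_lam(x - 1) >= n}, i.e. |x - 1| <= |lam|^n *)
Definition Cfilt (tau : L -> L) (lam : L) (n : nat) (x : L) : Prop :=
  Cgrp tau x /\ absv (x - 1) <= absv lam ^+ n.

End Defs.

Definition quot_card (T : Type) (A : T -> Prop) (r : T -> T -> Prop) (k : nat) : Prop :=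
  exists f : 'I_k -> T,
    [/\ forall i, A (f i),
        forall i j, r (f i) (f j) -> i = j
      & forall x, A x -> exists i, r x (f i)].

From HB Require Import structures.
From mathcomp Require Import all_boot all_order all_algebra.
From mathcomp Require Import reals boolp.
From mathcomp Require Import ring lra zify.
Set Implicit Arguments. Unset Strict Implicit. Unset Printing Implicit Defensive.
Import Order.TTheory GRing.Theory Num.Theory.
Local Open Scope ring_scope.

(* Fix delta with tau delta = - delta.  For s in the fixed field with |s delta| < 1 the Cayley
   transform (1 + s delta) / (1 - s delta) lies in C, and the quotient of two such transforms
   satisfies |cayley s / cayley t - 1| = |2| |(s - t) delta|.  Conversely every x in C with
   |x - 1| < |2| is a transform, namely of s = (x - 1) / ((x + 1) delta): this is where the
   hypothesis |lambda|^n < |2| (automatic for n >= 1 when l is odd) enters.  Rescaling s by an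
   element t0 of the fixed field of the right size, s |-> cayley (t0 s) therefore maps
   O_{L^tau} onto C(n) and induces a bijection O_{L^tau} / lambda ~ C(n) / C(n+1).
   That O_{L^tau} / lambda is finite at all comes from dim_{Q_l} L = N < oo: among more than
   l^N pairwise incongruent integers of L one finds N + 1 whose residues are independent over
   F_l, while any Q_l-linear relation between them, rescaled to have a coefficient of absolute
   value 1 and rounded to integers, gives an F_l-linear relation between the residues. *)

Section RatrCharZero.
Variable F : fieldType.
Hypothesis F_char0 : [pchar F] =i pred0.

Lemma intrF_eq0 (z : int) : (z%:~R == 0 :> F) = (z == 0).
Proof.
have natF_eq0 n : (n%:R == 0 :> F) = (n == 0)%N by apply: (pcharf0P _).1.
by case: z => n; rewrite ?NegzE ?mulrNz ?oppr_eq0 -?pmulrn natF_eq0.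
Qed.

Lemma ratr_frac (a b : int) : b != 0 ->
  ratr (a%:~R / b%:~R : rat) = a%:~R / b%:~R :> F.
Proof.
move=> b0; set q := (a%:~R / b%:~R : rat).
have /eqP : (numq q)%:~R / (denq q)%:~R = q by rewrite divq_num_den.
rewrite eqr_div ?intr_eq0 ?denq_neq0 // -!intrM => /eqP /intr_inj qE.
apply/eqP; rewrite eqr_div ?intrF_eq0 ?denq_neq0 //.
by rewrite -!intrM qE.
Qed.

Lemma ratrB p r : ratr (p - r) = ratr p - ratr r :> F.
Proof.
have [dp dr] := (denq_neq0 p, denq_neq0 r).
have -> : p - r = ((numq p * denq r - numq r * denq p)%:~R / (denq p * denq r)%:~R : rat).
  rewrite -[p in LHS]divq_num_den -[r in LHS]divq_num_den !intrD !intrN !intrM.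
  by field; rewrite !intr_eq0 dp dr.
rewrite ratr_frac ?mulf_neq0 // /ratr !intrD !intrN !intrM.
by field; rewrite !intrF_eq0 dp dr.
Qed.

Lemma ratrM p r : ratr (p * r) = ratr p * ratr r :> F.
Proof.
have [dp dr] := (denq_neq0 p, denq_neq0 r).
have -> : p * r = ((numq p * numq r)%:~R / (denq p * denq r)%:~R : rat).
  rewrite -[p in LHS]divq_num_den -[r in LHS]divq_num_den !intrM.
  by field; rewrite !intr_eq0 dp dr.
rewrite ratr_frac ?mulf_neq0 // /ratr !intrM.
by field; rewrite !intrF_eq0 dp dr.
Qed.

Lemma ratrV p : ratr p^-1 = (ratr p)^-1 :> F.
Proof.
have [->|p0] := eqVneq p 0; first by rewrite invr0 /ratr mul0r invr0.
have -> : p^-1 = ((denq p)%:~R / (numq p)%:~R : rat) by rewrite -[p in LHS]divq_num_den invf_div.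
by rewrite ratr_frac ?numq_eq0 // /ratr invf_div.
Qed.

End RatrCharZero.

Section AbsValue.
Variables (R : realType) (L : fieldType) (absv : L -> R).
Hypothesis absvP : is_abs_value absv.

Lemma absv_ge0 x : 0 <= absv x. Proof. by case: absvP. Qed.
Lemma absv_eq0 x : absv x = 0 <-> x = 0. Proof. by case: absvP. Qed.
Lemma absvM x y : absv (x * y) = absv x * absv y. Proof. by case: absvP. Qed.
Lemma absvD_max x y : absv (x + y) <= Num.max (absv x) (absv y).
Proof. by case: absvP. Qed.

Lemma absv0 : absv 0 = 0. Proof. exact/absv_eq0. Qed.

Lemma absv_gt0 x : x != 0 -> 0 < absv x.
Proof. by move=> /eqP x0; rewrite lt_def absv_ge0 andbT; apply/eqP => /absv_eq0. Qed.

Lemma absv1 : absv 1 = 1.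
Proof.
apply: (mulfI (lt0r_neq0 (absv_gt0 (oner_neq0 L)))).
by rewrite -absvM !mulr1.
Qed.

Lemma absv_eq1_neq0 x : absv x = 1 -> x != 0.
Proof. by apply: contra_eqN => /eqP ->; rewrite absv0 eq_sym oner_eq0. Qed.

Lemma absvN x : absv (- x) = absv x.
Proof.
have : absv (-1) ^+ 2 = 1 by rewrite expr2 -absvM mulrNN mulr1 absv1.
move/eqP; rewrite sqrf_eq1 => /orP[/eqP N1|/eqP N1].
  by rewrite -mulN1r absvM N1 mul1r.
by have := absv_ge0 (-1); rewrite N1 ler0N1.
Qed.

Lemma absvBC x y : absv (x - y) = absv (y - x).
Proof. by rewrite -opprB absvN. Qed.

Lemma absvV x : absv x^-1 = (absv x)^-1.
Proof.
have [->|x0] := eqVneq x 0; first by rewrite invr0 absv0 invr0.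
apply: (mulfI (lt0r_neq0 (absv_gt0 x0))).
by rewrite -absvM mulfV // absv1 mulfV // lt0r_neq0 // absv_gt0.
Qed.

Lemma absvf x y : absv (x / y) = absv x / absv y.
Proof. by rewrite absvM absvV. Qed.

Lemma absvX x n : absv (x ^+ n) = absv x ^+ n.
Proof. by elim: n => [|n IH]; rewrite ?absv1 // !exprS absvM IH. Qed.

Lemma absvD_le x y e : absv x <= e -> absv y <= e -> absv (x + y) <= e.
Proof. by move=> hx hy; apply: le_trans (absvD_max x y) _; rewrite ge_max hx. Qed.

Lemma absvD_lt x y e : absv x < e -> absv y < e -> absv (x + y) < e.
Proof. by move=> hx hy; apply: le_lt_trans (absvD_max x y) _; rewrite gt_max hx. Qed.

Lemma absvB_le x y e : absv x <= e -> absv y <= e -> absv (x - y) <= e.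
Proof. by move=> hx hy; apply: absvD_le; rewrite ?absvN. Qed.

Lemma absvB_lt x y e : absv x < e -> absv y < e -> absv (x - y) < e.
Proof. by move=> hx hy; apply: absvD_lt; rewrite ?absvN. Qed.

Lemma absvDr_eq x y : absv y < absv x -> absv (x + y) = absv x.
Proof.
move=> yx; apply/le_anti; rewrite (le_trans (absvD_max x y)) ?ge_max ?lexx ?(ltW yx) //=.
have := absvD_max (x + y) (- y); rewrite addrK absvN le_max.
by case/orP => [//|/(lt_le_trans yx)]; rewrite ltxx.
Qed.

Lemma absv1D_lt1 u : absv u < 1 -> absv (1 + u) = 1.
Proof. by move=> u1; rewrite absvDr_eq absv1. Qed.

Lemma absv1B_lt1 u : absv u < 1 -> absv (1 - u) = 1.
Proof. by move=> u1; rewrite absv1D_lt1 ?absvN. Qed.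

Lemma absv_sum_lt (I : Type) (r : seq I) (P : pred I) (F : I -> L) e :
  0 < e -> (forall i, P i -> absv (F i) < e) -> absv (\sum_(i <- r | P i) F i) < e.
Proof. by move=> e0 hF; elim/big_ind: _ => //; [rewrite absv0 | move=> x y; apply: absvD_lt]. Qed.

Lemma absvM_lt1 x y : absv x <= 1 -> absv y < 1 -> absv (x * y) < 1.
Proof. by move=> x1 y1; rewrite absvM; have := absv_ge0 x; have := absv_ge0 y; nra. Qed.

Lemma absv_nat n : absv n%:R <= 1.
Proof.
elim: n => [|n IH]; first by rewrite absv0 ler01.
by rewrite mulrS absvD_le // absv1.
Qed.

Lemma absv_int (z : int) : absv z%:~R <= 1.
Proof. by case: z => n; rewrite ?NegzE ?mulrNz ?absvN -pmulrn absv_nat. Qed.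

End AbsValue.

Section LadicField.
Variables (R : realType) (L : fieldType) (absv : L -> R) (l : nat).
Hypothesis absvP : is_abs_value absv.
Hypothesis absv_ratr : forall q : rat, absv (ratr q) = padic_abs R l q.
Hypothesis l_prime : prime l.

Lemma ladic_pchar0 : [pchar L] =i pred0.
Proof.
apply/pcharf0P => -[|n]; first by rewrite mulr0n !eqxx.
have : 0 < absv (n.+1%:R : L).
  rewrite -ratr_nat absv_ratr /padic_abs pnatr_eq0 /=.
  by rewrite divr_gt0 // exprn_gt0 // ltr0n prime_gt0.
by apply: contraTF => /eqP ->; rewrite (absv0 absvP) ltxx.
Qed.

Lemma absv_l : absv l%:R = l%:R^-1.
Proof.
rewrite -[l%:R : L]ratr_nat absv_ratr /padic_abs pnatr_eq0 gtn_eqF ?prime_gt0 //=.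
have -> : (l%:R : rat) = (l%:Z)%:Q by rewrite pmulrn.
by rewrite numq_int denq_int logn1 logn_prime // eqxx div1r.
Qed.

Lemma absv_l_lt1 : absv l%:R < 1.
Proof. by rewrite absv_l invf_lt1 ?ltr1n ?prime_gt1 // ltr0n prime_gt0. Qed.

Lemma absv_int_lt1 (z : int) : (l %| `|z|)%N -> absv z%:~R < 1.
Proof.
move=> lz; have /divzK <- : (l%:Z %| z)%Z by rewrite dvdzE.
by rewrite intrM (absvM_lt1 absvP) ?absv_int //; exact: absv_l_lt1.
Qed.

Lemma absv_intM_lt1 (a : int) x : (l %| `|a|)%N -> absv x <= 1 -> absv (a%:~R * x) < 1.
Proof. by move=> la x1; rewrite mulrC (absvM_lt1 absvP) // absv_int_lt1. Qed.

Lemma Bezout_prime_int (z : int) :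
  ~~ (l %| `|z|)%N -> exists u v : int, u * l%:Z + v * z = 1.
Proof.
move=> lNz; have [u [v uvE]] := Bezoutz l%:Z z; exists u, v.
by rewrite uvE; apply/eqP; rewrite -/(coprimez _ _) coprimezE prime_coprime.
Qed.

Lemma absv_int_eq1 (z : int) : ~~ (l %| `|z|)%N -> absv z%:~R = 1.
Proof.
move=> /Bezout_prime_int [u [v uvE]].
have : absv (v%:~R * z%:~R : L) = 1.
  have -> : v%:~R * z%:~R = 1 - (u * l%:Z)%:~R :> L.
    by apply/eqP; rewrite eq_sym subr_eq -intrM -intrD addrC uvE.
  rewrite (absvDr_eq absvP) ?(absv1 absvP) // (absvN absvP) absv_int_lt1 //.
  by rewrite abszM dvdn_mull.
rewrite (absvM absvP); have := absv_int absvP v; have := absv_int absvP z.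
by have := absv_ge0 absvP (v%:~R : L); have := absv_ge0 absvP (z%:~R : L); nra.
Qed.

Lemma absv2 : l != 2%N -> absv 2%:R = 1.
Proof.
by move=> l2; rewrite -[2%:R]/((2%:Z)%:~R : L) absv_int_eq1 //= dvdn_prime2 // eq_sym.
Qed.

Lemma ratr_near_int (q : rat) :
  absv (ratr q) <= 1 -> exists a : int, absv (ratr q - a%:~R) < 1.
Proof.
move=> q1; have d0 : (denq q)%:~R != 0 :> L by rewrite (intrF_eq0 ladic_pchar0) denq_neq0.
have lNd : ~~ (l %| `|denq q|)%N.
  apply/negP => ld; have lNn : ~~ (l %| `|numq q|)%N.
    apply/negP => ln; have : (l %| gcdn `|numq q| `|denq q|)%N by rewrite dvdn_gcd ln.
    by rewrite (eqP (coprime_num_den q)) dvdn1 => /eqP l1; move: l_prime; rewrite l1.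
  move: q1; rewrite /ratr (absvf absvP) absv_int_eq1 // ler_pdivrMr ?mul1r ?(absv_gt0 absvP) //.
  by rewrite leNgt absv_int_lt1.
have [u [v uvE]] := Bezout_prime_int lNd.
exists (numq q * v); rewrite /ratr.
have -> : (numq q)%:~R / (denq q)%:~R - (numq q * v)%:~R
          = (numq q * (u * l%:Z))%:~R / (denq q)%:~R :> L.
  have -> : u * l%:Z = 1 - v * denq q by rewrite -uvE addrK.
  by rewrite !intrM intrB; field.
rewrite (absvf absvP) (absv_int_eq1 lNd) divr1 absv_int_lt1 //.
by rewrite !abszM dvdn_mull ?dvdn_mull.
Qed.

Lemma in_Ql_ratr q : in_Ql absv (ratr q).
Proof. by move=> e e0; exists q; rewrite subrr (absv0 absvP). Qed.

Lemma in_QlB x y : in_Ql absv x -> in_Ql absv y -> in_Ql absv (x - y).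
Proof.
move=> hx hy e e0; have [p xp] := hx e e0; have [r yr] := hy e e0.
exists (p - r); rewrite (ratrB ladic_pchar0).
have -> : x - y - (ratr p - ratr r) = (x - ratr p) - (y - ratr r) by ring.
exact: (absvB_lt absvP).
Qed.

Lemma in_QlM x y : in_Ql absv x -> in_Ql absv y -> in_Ql absv (x * y).
Proof.
move=> hx hy e e0; set K := 1 + absv x + absv y.
have [x0 y0] := (absv_ge0 absvP x, absv_ge0 absvP y).
have K0 : 0 < K by rewrite /K; lra.
set d := Num.min 1 (e / K).
have d0 : 0 < d by rewrite lt_min ltr01 divr_gt0.
have dK : d * K <= e by rewrite -ler_pdivlMr // ge_min lexx orbT.
have small a b : absv a <= K -> absv b < d -> absv (a * b) < e.
  rewrite (absvM absvP) => aK bd.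
  by have := absv_ge0 absvP a; have := absv_ge0 absvP b; nra.
have [p xp] := hx d d0; have [r yr] := hy d d0.
exists (p * r); rewrite (ratrM ladic_pchar0).
have -> : x * y - ratr p * ratr r = x * (y - ratr r) + ratr r * (x - ratr p) by ring.
apply: (absvD_lt absvP); apply: small => //; first by rewrite /K; lra.
have -> : ratr r = y - (y - ratr r) :> L by ring.
have d1 : d <= 1 by rewrite ge_min lexx.
by rewrite (absvB_le absvP) // /K; lra.
Qed.

Lemma in_QlV x : in_Ql absv x -> in_Ql absv x^-1.
Proof.
have [->|x0] := eqVneq x 0; first by rewrite invr0.
move=> hx e e0; have ax := absv_gt0 absvP x0.
set d := Num.min (absv x) (e * absv x ^+ 2).
have d0 : 0 < d by rewrite lt_min ax mulr_gt0 // exprn_gt0.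
have [q xq] := hx d d0.
have qx : absv (ratr q : L) = absv x.
  rewrite -[ratr q](addrNK x) addrC (absvDr_eq absvP) // (absvBC absvP).
  by rewrite (lt_le_trans xq) // ge_min lexx.
have q0 : ratr q != 0 :> L by apply/eqP => q0; move: ax; rewrite -qx q0 (absv0 absvP) ltxx.
exists q^-1; rewrite (ratrV ladic_pchar0).
have -> : x^-1 - (ratr q)^-1 = (ratr q - x) / (x * ratr q) by field; rewrite x0 q0.
rewrite (absvf absvP) (absvM absvP) qx (absvBC absvP) ltr_pdivrMr ?mulr_gt0 //.
by rewrite (lt_le_trans xq) // ge_min -expr2 lexx orbT.
Qed.

Definition Ql_pred : {pred L} := fun x => `[< in_Ql absv x >].

Lemma Ql_pred_divring_closed : divring_closed Ql_pred.
Proof.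
split; first by apply/asboolP; rewrite -[1 : L](ratr_nat L 1); apply: in_Ql_ratr.
  by move=> x y /asboolP hx /asboolP hy; apply/asboolP; apply: in_QlB.
by move=> x y /asboolP hx /asboolP hy; apply/asboolP; apply: in_QlM => //; apply: in_QlV.
Qed.

HB.instance Definition _ := GRing.isDivringClosed.Build L Ql_pred Ql_pred_divring_closed.

Record Ql_sub := QlSub { Ql_val : L; Ql_valP : Ql_val \in Ql_pred }.
HB.instance Definition _ := [isSub for Ql_val].
HB.instance Definition _ := [Choice of Ql_sub by <:].
HB.instance Definition _ := [SubChoice_isSubIntegralDomain of Ql_sub by <:].
HB.instance Definition _ := [SubIntegralDomain_isSubField of Ql_sub by <:].

Lemma Ql_dependent N (b : 'I_N -> L) (z : 'I_N.+1 -> L) :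
  (forall i, exists c : 'I_N -> L, (forall j, in_Ql absv (c j)) /\ z i = \sum_j c j * b j) ->
  exists d : 'I_N.+1 -> L,
    [/\ forall i, in_Ql absv (d i), exists i, d i != 0 & \sum_i d i * z i = 0].
Proof.
move=> /choice [c zE].
have c_in i j : c i j \in Ql_pred by apply/asboolP; case: (zE i).
pose A : 'M[Ql_sub]_(N.+1, N) := \matrix_(i, j) insubd 0 (c i j).
have AE i j : val (A i j) = c i j by rewrite mxE insubdK.
have : kermx A != 0 by rewrite -mxrank_eq0 mxrank_ker subn_eq0 -ltnNge ltnS rank_leq_col.
case/rowV0Pn => v /sub_kermxP vA v0.
exists (fun i => val (v 0 i)); split.
- by move=> i; apply/asboolP; exact: (valP (v 0 i)).
- have [i vi|vN0] := pickP (fun i => v 0 i != 0).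
    by exists i; apply: contra vi => /eqP vi0; apply/eqP/val_inj.
  by case/eqP: v0; apply/rowP => i; rewrite mxE; apply/eqP; rewrite -[_ == _]negbK vN0.
have -> : \sum_i val (v 0 i) * z i = \sum_j val ((v *m A) 0 j) * b j.
  under eq_bigr => i _ do rewrite (proj2 (zE i)) mulr_sumr.
  rewrite exchange_big; apply: eq_bigr => j _.
  rewrite !mxE (raddf_sum (val : Ql_sub -> L)) mulr_suml; apply: eq_bigr => i _.
  by rewrite -AE mulrA; congr (_ * _); symmetry; exact: (rmorphM (val : Ql_sub -> L)).
by rewrite vA big1 // => j _; rewrite mxE mul0r.
Qed.

Definition int_comb (a : nat -> int) (z : nat -> L) j := \sum_(k < j) (a k)%:~R * z k.

(* The residues of [z 0], ..., [z (j - 1)] are linearly independent over F_l. *)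
Definition residue_free (z : nat -> L) j :=
  forall i, (i < j)%N -> forall a : nat -> int, 1 <= absv (z i - int_comb a z i).

Section ResidueFree.
Variable z : nat -> L.
Hypothesis z_le1 : forall i, absv (z i) <= 1.

Lemma residue_free_dvd j : residue_free z j ->
  forall a, absv (int_comb a z j) < 1 -> forall i, (i < j)%N -> (l %| `|a i|)%N.
Proof.
elim: j => [|j IH] zfree a; rewrite /int_comb ?big_ord_recr //= -/(int_comb a z j) => small i.
have laj : (l %| `|a j|)%N.
  apply/negPn/negP => /Bezout_prime_int [u [v uvE]].
  have := zfree j (ltnSn j) (fun k => - (v * a k)); apply/negP; rewrite -ltNge.
  have -> : z j - int_comb (fun k => - (v * a k)) z j
          = v%:~R * (int_comb a z j + (a j)%:~R * z j) + (u * l%:Z)%:~R * z j.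
    have -> : u * l%:Z = 1 - v * a j by rewrite -uvE addrK.
    rewrite /int_comb; under eq_bigr => k _ do rewrite intrN intrM mulNr -mulrA.
    by rewrite sumrN -mulr_sumr intrB !intrM; ring.
  apply: (absvD_lt absvP); first by rewrite (absvM_lt1 absvP) ?absv_int.
  by rewrite absv_intM_lt1 // abszM dvdn_mull.
rewrite ltnS leq_eqVlt => /orP[/eqP -> //|ij].
apply: IH ij => [k kj|]; first by apply: zfree; rewrite ltnW.
rewrite -[int_comb _ _ _](addrK ((a j)%:~R * z j)).
by rewrite (absvB_lt absvP) ?absv_intM_lt1.
Qed.

Lemma int_comb_cong (a b : nat -> int) j :
  (forall k : 'I_j, (a k %% l%:Z)%Z = (b k %% l%:Z)%Z) ->
  absv (int_comb a z j - int_comb b z j) < 1.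
Proof.
move=> abE; rewrite /int_comb -sumrB (absv_sum_lt absvP) // => k _.
rewrite -mulrBl -intrB absv_intM_lt1 //.
have -> : a k - b k = (divz (a k) l%:Z - divz (b k) l%:Z) * l%:Z.
  by rewrite [in LHS](divz_eq (a k) l%:Z) [in LHS](divz_eq (b k) l%:Z) abE; ring.
by rewrite abszM dvdn_mull.
Qed.

(* Integer combinations of [z 0], ..., [z (j - 1)] take at most [l ^ j] residues. *)
Lemma exists_far_from_int_combs j M (f : 'I_M -> L) :
  (forall p p', absv (f p - f p') < 1 -> p = p') -> (l ^ j < M)%N ->
  exists p, forall a, 1 <= absv (f p - int_comb a z j).
Proof.
move=> f_far lt_lj_M; apply: contrapT => noP.
have /choice [g gP] : forall p, exists a, absv (f p - int_comb a z j) < 1.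
  move=> p; apply: contrapT => pN; apply: noP; exists p => a.
  by rewrite leNgt; apply/negP => fa; apply: pN; exists a.
have l0 : (0 < l%:Z)%R by rewrite ltz_nat prime_gt0.
have mod_lt (x : int) : (absz (x %% l%:Z)%Z < l)%N.
  by have := ltz_pmod x l0; have := modz_ge0 x (lt0r_neq0 l0); lia.
pose phi p : {ffun 'I_j -> 'I_l} := [ffun k : 'I_j => Ordinal (mod_lt (g p k))].
suff /leq_card : injective phi by rewrite card_ffun !card_ord leqNgt lt_lj_M.
move=> p p' /ffunP phiE; apply: f_far.
have gE (k : 'I_j) : (g p k %% l%:Z)%Z = (g p' k %% l%:Z)%Z.
  have := congr1 val (phiE k); rewrite !ffunE /=.
  by have := modz_ge0 (g p k) (lt0r_neq0 l0); have := modz_ge0 (g p' k) (lt0r_neq0 l0); lia.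
have -> : f p - f p' = (f p - int_comb (g p) z j) - (f p' - int_comb (g p') z j)
                       + (int_comb (g p) z j - int_comb (g p') z j) by ring.
by apply: (absvD_lt absvP); [apply: (absvB_lt absvP) | exact: int_comb_cong].
Qed.

End ResidueFree.

Lemma exists_residue_free N M (f : 'I_M -> L) :
  (forall p, absv (f p) <= 1) -> (forall p p', absv (f p - f p') < 1 -> p = p') ->
  (l ^ N < M)%N -> exists z, (forall i, absv (z i) <= 1) /\ residue_free z N.+1.
Proof.
move=> f_le1 f_far lt_lN_M.
suff: forall j, (j <= N.+1)%N -> exists z, (forall i, absv (z i) <= 1) /\ residue_free z j.
  by apply.
elim=> [_|j IH jN]; first by exists (fun=> 0); split=> // i; rewrite (absv0 absvP) ler01.
have [z [z_le1 zfree]] := IH (ltnW jN).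
have lt_lj_M : (l ^ j < M)%N by rewrite (leq_ltn_trans _ lt_lN_M) // leq_exp2l ?prime_gt1.
have [p fpP] := exists_far_from_int_combs z_le1 f_far lt_lj_M.
exists (fun i => if i == j then f p else z i); split=> [i|i].
  by case: eqP => _; [apply: f_le1 | apply: z_le1].
rewrite ltnS leq_eqVlt => /orP[/eqP ->|ij] a; rewrite /int_comb.
  under eq_bigr => k _ do rewrite (ltn_eqF (ltn_ord k)).
  by rewrite eqxx; apply: fpP.
under eq_bigr => k _ do rewrite (ltn_eqF (ltn_trans (ltn_ord k) ij)).
by rewrite (ltn_eqF ij); apply: zfree.
Qed.

Lemma int_relation_of_Ql_relation m (d : 'I_m -> L) (z : nat -> L) :
  (forall i, absv (z i) <= 1) -> (forall i, in_Ql absv (d i)) -> (exists i, d i != 0) ->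
  \sum_i d i * z i = 0 ->
  exists (a : nat -> int) (i0 : 'I_m), ~~ (l %| `|a i0|)%N /\ absv (int_comb a z m) < 1.
Proof.
move=> z_le1 d_Ql [i1 di1] dz0.
have [i0 _ d_max] := @arg_maxP _ R _ i1 xpredT (fun i => absv (d i)) isT.
have di0 : d i0 != 0.
  by apply: contraTneq (d_max i1 isT) => ->; rewrite (absv0 absvP) -ltNge absv_gt0.
pose e i := d i / d i0.
have e_le1 i : absv (e i) <= 1.
  by rewrite /e (absvf absvP) ler_pdivrMr ?mul1r ?(absv_gt0 absvP) //; apply: d_max.
have ez0 : \sum_i e i * z i = 0.
  by rewrite /e; under eq_bigr => i _ do rewrite mulrAC; rewrite -mulr_suml dz0 mul0r.
have /choice [A eA] : forall i, exists a : int, absv (e i - a%:~R) < 1.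
  move=> i; have [q eq] := in_QlM (d_Ql i) (in_QlV (d_Ql i0)) ltr01.
  have [|a qa] := @ratr_near_int q.
    have -> : ratr q = e i - (e i - ratr q) :> L by ring.
    by apply: (absvB_le absvP) => //; apply: ltW.
  exists a; have -> : e i - a%:~R = (e i - ratr q) + (ratr q - a%:~R) by ring.
  exact: (absvD_lt absvP).
exists (fun k => oapp A 0 (insub k)), i0; split.
  rewrite valK /=; apply/negP => /absv_int_lt1 Ai0.
  have := eA i0; rewrite /e divff // (absvBC absvP) => A1.
  have : absv ((A i0)%:~R - ((A i0)%:~R - 1) : L) < 1 by apply: (absvB_lt absvP).
  by rewrite subKr (absv1 absvP) ltxx.
have -> : int_comb (fun k => oapp A 0 (insub k)) z m
          = \sum_i ((A i)%:~R - e i) * z i + \sum_i e i * z i.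
  rewrite -big_split /=; apply: eq_bigr => k _.
  by rewrite valK /=; ring.
rewrite ez0 addr0 (absv_sum_lt absvP) // => k _.
by rewrite mulrC (absvM_lt1 absvP) // (absvBC absvP).
Qed.

Lemma card_far_unit_family_le N (b : 'I_N -> L) :
  (forall x, exists c : 'I_N -> L, (forall i, in_Ql absv (c i)) /\ x = \sum_i c i * b i) ->
  forall M (f : 'I_M -> L), (forall p, absv (f p) <= 1) ->
  (forall p p', absv (f p - f p') < 1 -> p = p') -> (M <= l ^ N)%N.
Proof.
move=> b_span M f f_le1 f_far; rewrite leqNgt; apply/negP => lt_lN_M.
have [z [z_le1 zfree]] := exists_residue_free f_le1 f_far lt_lN_M.
have [d [d_Ql d_neq0 dz0]] := @Ql_dependent N b (fun i => z i) (fun i => b_span (z i)).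
have [a [i0 [lNa small]]] := int_relation_of_Ql_relation z_le1 d_Ql d_neq0 dz0.
by move: lNa; rewrite (residue_free_dvd z_le1 zfree small).
Qed.

End LadicField.

Lemma quot_card_of_bounded (T : Type) (A : T -> Prop) (r : T -> T -> Prop) B :
  (forall x y, r x y -> r y x) ->
  (forall M (f : 'I_M -> T),
     (forall i, A (f i)) -> (forall i j, r (f i) (f j) -> i = j) -> (M <= B)%N) ->
  exists k, quot_card A r k.
Proof.
move=> r_sym bounded.
pose P M := `[< exists f : 'I_M -> T,
                  (forall i, A (f i)) /\ (forall i j, r (f i) (f j) -> i = j) >].
have P0 : exists M, P M.
  exists 0%N; apply/asboolP.
  by exists (fun i : 'I_0 => False_rect T (notF (ltn_ord i))); split; case.
have P_le M : P M -> (M <= B)%N by move=> /asboolP [f [fA f_inj]]; apply: bounded fA f_inj.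
have [k /asboolP [f [fA f_inj]] k_max] := ex_maxnP P0 P_le.
exists k, f; split=> // x Ax; apply: contrapT => x_new.
pose g i := if unlift ord_max i is Some j then f j else x.
suff /k_max : P k.+1 by rewrite ltnn.
apply/asboolP; exists g; split=> [i|i j]; first by rewrite /g; case: unliftP.
rewrite /g; case: unliftP => [i' ->|->]; case: unliftP => [j' ->|->] //.
- by move/f_inj ->.
- by move/r_sym => rxf; case: x_new; exists i'.
- by move=> rxf; case: x_new; exists j'.
Qed.

Section Involution.
Variables (L : fieldType) (tau : L -> L).
Hypothesis tauP : order2_aut tau.

Lemma tauD x y : tau (x + y) = tau x + tau y. Proof. by case: tauP. Qed.
Lemma tauM x y : tau (x * y) = tau x * tau y. Proof. by case: tauP. Qed.
Lemma tau1 : tau 1 = 1. Proof. by case: tauP. Qed.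
Lemma tauK x : tau (tau x) = x. Proof. by case: tauP. Qed.

Lemma tau0 : tau 0 = 0.
Proof. by apply: (@addrI _ (tau 0)); rewrite -tauD !addr0. Qed.

Lemma tauN x : tau (- x) = - tau x.
Proof. by apply: (@addrI _ (tau x)); rewrite -tauD !subrr tau0. Qed.

Lemma tauB x y : tau (x - y) = tau x - tau y.
Proof. by rewrite tauD tauN. Qed.

Lemma tauV x : tau x^-1 = (tau x)^-1.
Proof.
have [->|x0] := eqVneq x 0; first by rewrite invr0 tau0 invr0.
have tx_inv : tau x * tau x^-1 = 1 by rewrite -tauM mulfV // tau1.
have tx0 : tau x != 0 by apply: contra_eqN tx_inv => /eqP ->; rewrite mul0r eq_sym oner_eq0.
by apply: (mulfI tx0); rewrite tx_inv mulfV.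
Qed.

Lemma tauf x y : tau (x / y) = tau x / tau y.
Proof. by rewrite tauM tauV. Qed.

Lemma tauX x m : tau (x ^+ m) = tau x ^+ m.
Proof. by elim: m => [|m IH]; rewrite ?tau1 // !exprS tauM IH. Qed.

End Involution.

Section FixedField.
Variables (R : realType) (L : fieldType) (absv : L -> R) (tau : L -> L) (lam : L).
Hypothesis absvP : is_abs_value absv.
Hypothesis tauP : order2_aut tau.
Hypothesis lamP : uniformizer absv tau lam.

Definition lam_cong x y := exists z, O_fix absv tau z /\ x - y = lam * z.

Lemma absv_lam_gt0 : 0 < absv lam.
Proof. by case: lamP => _ /eqP lam0 _ _; apply: absv_gt0. Qed.

Lemma absv_lam_lt1 : absv lam < 1.
Proof. by case: lamP. Qed.

Lemma O_fixB x y : O_fix absv tau x -> O_fix absv tau y -> O_fix absv tau (x - y).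
Proof. by move=> [tx x1] [ty y1]; split; [rewrite (tauB tauP) tx ty | apply: (absvB_le absvP)]. Qed.

Lemma lam_cong_sym x y : lam_cong x y -> lam_cong y x.
Proof.
move=> [z [Oz xyE]]; exists (- z); split; last by rewrite mulrN -xyE opprB.
by rewrite -sub0r; apply: O_fixB Oz; split; rewrite ?(tau0 tauP) ?(absv0 absvP).
Qed.

Lemma lam_cong_of_lt1 x y :
  O_fix absv tau x -> O_fix absv tau y -> absv (x - y) < 1 -> lam_cong x y.
Proof. by case: lamP => _ _ _ lam_gen Ox Oy /(lam_gen _ (O_fixB Ox Oy)). Qed.

Lemma fixed_absv_le1 y : tau y = y -> absv y * absv lam < 1 -> absv y <= 1.
Proof.
move=> ty ylam; rewrite leNgt; apply/negP => y1.
have y0 : y != 0 by apply: contraTneq y1 => ->; rewrite (absv0 absvP) ltr10.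
have Oyinv : O_fix absv tau y^-1.
  by split; [rewrite (tauV tauP) ty | rewrite (absvV absvP) invf_le1 ?ltW // (lt_trans ltr01)].
have yinv1 : absv y^-1 < 1 by rewrite (absvV absvP) invf_lt1 // (lt_trans ltr01).
case: lamP => _ _ _ /(_ _ Oyinv yinv1) [z [[_ z1] yE]].
have : absv y^-1 <= absv lam.
  by rewrite yE (absvM absvP) ler_piMr ?(absv_ge0 absvP).
rewrite (absvV absvP) => /(ler_wpM2l (absv_ge0 absvP y)).
by rewrite mulfV ?lt0r_neq0 ?(lt_trans ltr01) // leNgt ylam.
Qed.

Lemma O_fix_quot_card l : prime l ->
  (forall q : rat, absv (ratr q) = padic_abs R l q) -> finite_over_Ql absv ->
  exists k, quot_card (O_fix absv tau) lam_cong k.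
Proof.
move=> l_prime absv_ratr [N [b b_span]].
apply: (quot_card_of_bounded (B := l ^ N)) => [|M f Of f_inj]; first exact: lam_cong_sym.
apply: (card_far_unit_family_le absvP absv_ratr l_prime b_span (f := f)) => [p|p p' fpp'].
  by case: (Of p).
exact/f_inj/lam_cong_of_lt1.
Qed.

End FixedField.

Section Cayley.
Variables (R : realType) (L : fieldType) (absv : L -> R) (tau : L -> L) (lam delta : L).
Hypothesis absvP : is_abs_value absv.
Hypothesis tauP : order2_aut tau.
Hypothesis delta_anti : tau delta = - delta.
Hypothesis delta0 : delta != 0.
Hypothesis two_neq0 : 2%:R != 0 :> L.

Local Notation c := (absv 2%:R).

Definition cayley s := (1 + s * delta) / (1 - s * delta).

Lemma Cgrp_div x y : Cgrp absv tau x -> Cgrp absv tau y -> Cgrp absv tau (x / y).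
Proof.
move=> [x1 xE] [y1 yE]; split; first by rewrite (absvf absvP) x1 y1 divr1.
by rewrite (tauf tauP) mulf_div xE yE divr1.
Qed.

Lemma cayley_Cgrp s : tau s = s -> absv (s * delta) < 1 -> Cgrp absv tau (cayley s).
Proof.
move=> ts sd1; have [D1 B1] := (absv1D_lt1 absvP sd1, absv1B_lt1 absvP sd1).
split; first by rewrite (absvf absvP) D1 B1 divr1.
rewrite /cayley (tauf tauP) (tauD tauP) (tauB tauP) (tau1 tauP) (tauM tauP) ts delta_anti.
by rewrite mulrN opprK; field; rewrite !(absv_eq1_neq0 absvP).
Qed.

Lemma cayley_div_sub1 s t : absv (s * delta) < 1 -> absv (t * delta) < 1 ->
  absv (cayley s / cayley t - 1) = c * absv ((s - t) * delta).
Proof.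
move=> sd1 td1; have [sB1 tB1] := (absv1B_lt1 absvP sd1, absv1B_lt1 absvP td1).
have tD1 := absv1D_lt1 absvP td1.
have -> : cayley s / cayley t - 1
          = 2%:R * ((s - t) * delta) / ((1 - s * delta) * (1 + t * delta)).
  by rewrite /cayley; field; rewrite !(absv_eq1_neq0 absvP).
by rewrite (absvf absvP) !(absvM absvP) sB1 tD1 mulr1 divr1.
Qed.

Lemma cayley_sub1 s : absv (s * delta) < 1 -> absv (cayley s - 1) = c * absv (s * delta).
Proof.
move=> sd1; have sB1 := absv1B_lt1 absvP sd1.
have -> : cayley s - 1 = 2%:R * (s * delta) / (1 - s * delta).
  by rewrite /cayley; field; rewrite (absv_eq1_neq0 absvP).
by rewrite (absvf absvP) (absvM absvP) sB1 divr1.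
Qed.

Lemma Cgrp_cayley x : Cgrp absv tau x -> absv (x - 1) < c ->
  exists s, [/\ tau s = s, absv (s * delta) < 1 & cayley s = x].
Proof.
move=> [x1 xE] xc; have x0 := absv_eq1_neq0 absvP x1.
have c0 : 0 < c := absv_gt0 absvP two_neq0.
have xD1 : absv (x + 1) = c.
  have -> : x + 1 = 2%:R + (x - 1) by ring.
  by rewrite (absvDr_eq absvP).
have xD0 : x + 1 != 0 by apply: contraTneq c0 => xD0; rewrite -xD1 xD0 (absv0 absvP) ltxx.
have tx : tau x = x^-1 by rewrite -[tau x]mul1r -(mulVf x0) -mulrA xE mulr1.
have sdE : (x - 1) / ((x + 1) * delta) * delta = (x - 1) / (x + 1) by field; rewrite delta0 xD0.
exists ((x - 1) / ((x + 1) * delta)); split.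
- rewrite (tauf tauP) (tauM tauP) (tauB tauP) (tauD tauP) (tau1 tauP) tx delta_anti.
  by field; rewrite x0 delta0 xD0 oppr_eq0 delta0.
- by rewrite sdE (absvf absvP) xD1 ltr_pdivrMr // mul1r.
rewrite /cayley sdE; field; rewrite xD0 /=.
by have -> : x + 1 - (x - 1) = 2%:R by ring.
Qed.

Section Filtration.
Variable n : nat.
Hypothesis lamP : uniformizer absv tau lam.
Hypothesis lam_small : absv lam ^+ n < c.

Local Notation q := (absv lam).

Definition cayley_radius := q ^+ n / (c * absv delta).
Local Notation rho := cayley_radius.

Lemma cayley_radiusE s : c * absv (s * delta) = q ^+ n * (absv s / rho).
Proof.
have [c0 d0] := (absv_gt0 absvP two_neq0, absv_gt0 absvP delta0).
have q0 := absv_lam_gt0 absvP lamP.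
by rewrite /rho (absvM absvP); field; rewrite !lt0r_neq0 ?exprn_gt0.
Qed.

Lemma cayley_radius_gt0 : 0 < rho.
Proof.
have q0 := absv_lam_gt0 absvP lamP.
by rewrite divr_gt0 ?exprn_gt0 // mulr_gt0 // (absv_gt0 absvP).
Qed.

Lemma absv_lt1_of_le_radius s : absv s <= rho -> absv (s * delta) < 1.
Proof.
move=> s_rho; have c0 := absv_gt0 absvP two_neq0.
rewrite -(ltr_pM2l c0) mulr1 cayley_radiusE (le_lt_trans _ lam_small) //.
by rewrite ler_piMr ?exprn_ge0 ?(absv_ge0 absvP) // ler_pdivrMr ?mul1r ?cayley_radius_gt0.
Qed.

Lemma cayley_Cfilt s : tau s = s -> absv s <= rho -> Cfilt absv tau lam n (cayley s).
Proof.
move=> ts s_rho; have sd1 := absv_lt1_of_le_radius s_rho.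
split; first exact: cayley_Cgrp.
rewrite cayley_sub1 // cayley_radiusE ler_piMr ?exprn_ge0 ?(absv_ge0 absvP) //.
by rewrite ler_pdivrMr ?mul1r ?cayley_radius_gt0.
Qed.

Lemma Cfilt_cayley x : Cfilt absv tau lam n x ->
  exists s, [/\ tau s = s, absv s <= rho & cayley s = x].
Proof.
move=> [Cx x_near]; have [s [ts sd1 sx]] := Cgrp_cayley Cx (le_lt_trans x_near lam_small).
exists s; split=> //; move: x_near; rewrite -sx cayley_sub1 // cayley_radiusE.
have qn0 : 0 < q ^+ n := exprn_gt0 n (absv_lam_gt0 absvP lamP).
by rewrite ger_pMr // ler_pdivrMr ?mul1r ?cayley_radius_gt0.
Qed.

Lemma cayley_div_CfiltP s t : tau s = s -> tau t = t -> absv s <= rho -> absv t <= rho ->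
  Cfilt absv tau lam n.+1 (cayley s / cayley t) <-> absv (s - t) <= q * rho.
Proof.
move=> ts tt s_rho t_rho.
have [sd1 td1] := (absv_lt1_of_le_radius s_rho, absv_lt1_of_le_radius t_rho).
have qn0 : 0 < q ^+ n := exprn_gt0 n (absv_lam_gt0 absvP lamP).
rewrite /Cfilt cayley_div_sub1 // cayley_radiusE exprSr ler_pM2l //.
rewrite ler_pdivrMr ?cayley_radius_gt0 //.
by split=> [[] //|]; split=> //; apply: Cgrp_div; apply: cayley_Cgrp.
Qed.

Lemma Cfilt_quot_card k t0 : tau t0 = t0 -> q * rho < absv t0 -> absv t0 <= rho ->
  quot_card (O_fix absv tau) (lam_cong absv tau lam) k ->
  quot_card (Cfilt absv tau lam n) (fun x y => Cfilt absv tau lam n.+1 (x / y)) k.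
Proof.
move=> tt0 t0_gt t0_rho [f [Of f_inj f_surj]].
have q0 := absv_lam_gt0 absvP lamP.
have t0_gt0 : 0 < absv t0 by rewrite (lt_trans _ t0_gt) // mulr_gt0 ?cayley_radius_gt0.
have tf i : tau (t0 * f i) = t0 * f i by rewrite (tauM tauP) tt0; case: (Of i) => ->.
have tf_rho i : absv (t0 * f i) <= rho.
  by rewrite (absvM absvP) (le_trans _ t0_rho) // ler_piMr ?(absv_ge0 absvP) //; case: (Of i).
exists (fun i => cayley (t0 * f i)); split.
- by move=> i; apply: cayley_Cfilt.
- move=> i j /(cayley_div_CfiltP (tf i) (tf j) (tf_rho i) (tf_rho j)).
  rewrite -mulrBr (absvM absvP) => /le_lt_trans/(_ t0_gt).
  rewrite -[X in _ < X]mulr1 ltr_pM2l // => fij.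
  by apply/f_inj/(lam_cong_of_lt1 absvP tauP lamP).
move=> x /Cfilt_cayley [s [ts s_rho <-]].
have t00 : t0 != 0 by apply: contraTneq t0_gt0 => ->; rewrite (absv0 absvP) ltxx.
have ty : tau (s / t0) = s / t0 by rewrite (tauf tauP) ts tt0.
have y1 : absv (s / t0) <= 1.
  apply: (fixed_absv_le1 absvP tauP lamP) => //.
  rewrite (absvf absvP) mulrAC ltr_pdivrMr // mul1r (le_lt_trans _ t0_gt) //.
  by rewrite mulrC ler_pM2l.
have [i [z [[_ z1] yE]]] := f_surj _ (conj ty y1).
exists i; apply/(cayley_div_CfiltP ts (tf i) s_rho (tf_rho i)).
have -> : s - t0 * f i = t0 * (lam * z) by rewrite -yE; field.
rewrite !(absvM absvP) mulrCA ler_pM2l // (le_trans _ t0_rho) //.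
by rewrite ler_piMr ?(absv_ge0 absvP).
Qed.
End Filtration.

End Cayley.

Lemma Bernoulli_ineq (R : realFieldType) (h : R) N : 0 <= h -> 1 + N%:R * h <= (1 + h) ^+ N.
Proof.
move=> h0; elim: N => [|N IH]; first by rewrite mul0r addr0.
by rewrite exprS -natr1; have := mulr_ge0 (ler0n _ N) h0; nra.
Qed.

Lemma exists_expr_lt (R : realType) (q e : R) : 0 < q -> q < 1 -> 0 < e -> exists N, q ^+ N < e.
Proof.
move=> q0 q1 e0; set h := q^-1 - 1.
have h0 : 0 < h by rewrite subr_gt0 invf_gt1.
have eh0 : 0 <= (e * h)^-1 by rewrite invr_ge0 mulr_ge0 // ltW.
exists (Num.Def.archi_bound (e * h)^-1); set N := Num.Def.archi_bound _.
have /archi_boundP : 0 <= (e * h)^-1 by [].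
rewrite -/N -div1r ltr_pdivrMr ?mulr_gt0 // => Neh.
have := Bernoulli_ineq N (ltW h0); rewrite (_ : 1 + h = q^-1); last by rewrite /h; ring.
have qN0 : 0 < q ^+ N by rewrite exprn_gt0.
have qNV : q ^+ N * q^-1 ^+ N = 1 by rewrite -exprMn mulfV ?gt_eqF // expr1n.
by have := mulr_ge0 (ler0n _ N) (ltW h0); move: Neh; rewrite mulrCA => Neh; nra.
Qed.

Lemma exists_expr_ratio_between (R : realType) (q M : R) : 0 < q -> q < 1 -> 0 < M ->
  exists a b : nat, q * M < q ^+ a / q ^+ b /\ q ^+ a / q ^+ b <= M.
Proof.
move=> q0 q1 M0; have MV0 : 0 < M^-1 by rewrite invr_gt0.
have [b] := exists_expr_lt q0 q1 MV0; rewrite -div1r ltr_pdivlMr // => qbM.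
have qb0 : 0 < q ^+ b by rewrite exprn_gt0.
have exP : exists a, q ^+ a <= q ^+ b * M.
  by have [a /ltW] := exists_expr_lt q0 q1 (mulr_gt0 qb0 M0); exists a.
have [a qa a_min] := ex_minnP exP.
exists a, b; split; last by rewrite ler_pdivrMr // mulrC.
rewrite ltr_pdivlMr //; have := mulr_gt0 qb0 M0.
case: a qa a_min => [|a] qa a_min; first by rewrite expr0; nra.
have : ~~ (q ^+ a <= q ^+ b * M) by apply/negP => /a_min; rewrite ltnn.
by rewrite -ltNge exprS; nra.
Qed.

Theorem lemma6p2 (R : realType) (L : fieldType) (absv : L -> R) (l : nat)
    (tau : L -> L) (lam : L) (n : nat) :
  prime l ->
  finite_ext_Ql absv l ->
  order2_aut tau ->
  uniformizer absv tau lam ->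
  ((l != 2)%N /\ (1 <= n)%N \/ l = 2%N /\ absv lam ^+ n < absv (2%:R : L)) ->
  exists k : nat,
    quot_card (Cfilt absv tau lam n)
              (fun x y => Cfilt absv tau lam n.+1 (x / y)) k /\
    quot_card (O_fix absv tau)
              (fun x y => exists z, O_fix absv tau z /\ x - y = lam * z) k.
Proof.
move=> l_prime [absvP _ absv_ratr Ql_fin] tauP lamP n_cond.
have q0 := absv_lam_gt0 absvP lamP.
have lam_small : absv lam ^+ n < absv (2%:R : L).
  case: n_cond => [[l2 n1]|[_ //]].
  by rewrite (absv2 absvP absv_ratr) // exprn_ilt1 ?ltW ?(absv_lam_lt1 lamP) // -lt0n.
have two0 : 2%:R != 0 :> L by rewrite ((pcharf0P _).1 (ladic_pchar0 absvP absv_ratr l_prime)).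
have [w tw] : exists w, tau w <> w by case: tauP.
set delta := w - tau w.
have delta_anti : tau delta = - delta by rewrite (tauB tauP) (tauK tauP) opprB.
have delta0 : delta != 0 by rewrite subr_eq0 eq_sym; apply/eqP.
have [k Ok] := O_fix_quot_card absvP tauP lamP l_prime absv_ratr Ql_fin.
have [a [b []]] := exists_expr_ratio_between q0 (absv_lam_lt1 lamP)
  (cayley_radius_gt0 absvP delta0 two0 n lamP).
rewrite -!(absvX absvP) -(absvf absvP) => t0_gt t0_le.
exists k; split=> //.
apply: (Cfilt_quot_card absvP tauP delta_anti delta0 two0 lamP lam_small _ t0_gt t0_le Ok).
by rewrite (tauf tauP) !(tauX tauP); case: lamP => -[-> _].
Qed.
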